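(* For $N\in\mathbb{N}$ and $z,w\in\mathbb{C}$ let $K_N(z,w)=\sum_{m=0}^{N-1}\frac{N^m}{m!}(z\overline w)^m$. For every $\lambda\in(0,1)$ there are a constant $C(\lambda)>0$ and a constant $\delta(\lambda)\in(0,1)$ such that for all $N\in\mathbb{N}$ and all $z,w\in\mathbb{C}$ with $|z|,|w|<\lambda$, $$\big|e^{Nz\overline w}-K_N(z,w)\big|\le C\,\frac{e^{N|z\overline w|}}{\sqrt N}\,\delta^N .$$ *)

From Stdlib Require Import Reals Factorial.
From Coquelicot Require Import Coquelicot.
Open Scope R_scope.

Definition cexp (z : C) : C :=
  (exp (Re z) * cos (Im z), exp (Re z) * sin (Im z)).

Fixpoint cpow (z : C) (n : nat) : C :=
  match n with O => RtoC 1 | S k => Cmult (cpow z k) z end.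

Fixpoint csum (f : nat -> C) (n : nat) : C :=
  match n with O => RtoC 0 | S k => Cplus (csum f k) (f k) end.

Definition KN (N : nat) (z w : C) : C :=
  csum (fun m => Cmult (RtoC (INR N ^ m / INR (fact m))) (cpow (Cmult z (Cconj w)) m)) N.

From Stdlib Require Import Reals Factorial Lra Lia.
From Coquelicot Require Import Coquelicot.
Open Scope R_scope.

(* Write u = z * conj w, so that |u| < rho = lam^2.  The remainder
   R_n(t) = e^(tu) - sum_(m<n) (tu)^m / m!  satisfies R_(n+1)' = u R_n and R_(n+1)(0) = 0,
   so induction on n and the mean value inequality bound |R_n(t)| by the same remainder
   for the real number |u|.  At t = N that is a tail of the exponential series, which the
   ratio test bounds by (N|u|)^N / N! / (1 - rho); then N^N / N! <= e^N and the monotonicity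
   of r e^(1-r) on [0, 1] give e^(N|u|) (rho e^(1-rho))^N / (1 - rho), where rho e^(1-rho) < 1.
   Finally sqrt N is absorbed by enlarging the rate rho e^(1-rho) to some delta < 1. *)

Definition is_cderive (f : R -> C) (t : R) (l : C) : Prop :=
  is_derive (fun s => Re (f s)) t (Re l) /\ is_derive (fun s => Im (f s)) t (Im l).

Lemma is_cderive_plus (f g : R -> C) (t : R) (lf lg : C) :
  is_cderive f t lf -> is_cderive g t lg ->
  is_cderive (fun s => f s + g s)%C t (lf + lg)%C.
Proof.
  intros [Hf1 Hf2] [Hg1 Hg2]; split;
    [exact (is_derive_plus _ _ _ _ _ Hf1 Hg1) | exact (is_derive_plus _ _ _ _ _ Hf2 Hg2)].
Qed.

Lemma is_cderive_minus (f g : R -> C) (t : R) (lf lg : C) :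
  is_cderive f t lf -> is_cderive g t lg ->
  is_cderive (fun s => f s - g s)%C t (lf - lg)%C.
Proof.
  intros [Hf1 Hf2] [Hg1 Hg2]; split;
    [exact (is_derive_minus _ _ _ _ _ Hf1 Hg1) | exact (is_derive_minus _ _ _ _ _ Hf2 Hg2)].
Qed.

Lemma is_cderive_RtoC_mul (phi : R -> R) (c : C) (t phi' : R) :
  is_derive phi t phi' -> is_cderive (fun s => RtoC (phi s) * c)%C t (RtoC phi' * c)%C.
Proof.
  destruct c as [a b]; intros H; split; simpl.
  - apply (is_derive_ext (fun s => phi s * a)); [intros s; simpl; ring|].
    replace (phi' * a - 0 * b) with (phi' * a) by ring.
    exact (is_derive_scal_l _ _ _ _ H).
  - apply (is_derive_ext (fun s => phi s * b)); [intros s; simpl; ring|].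
    replace (phi' * b + 0 * a) with (phi' * b) by ring.
    exact (is_derive_scal_l _ _ _ _ H).
Qed.

Lemma is_cderive_cexp (x : C) (t : R) :
  is_cderive (fun s => cexp (RtoC s * x)) t (x * cexp (RtoC t * x))%C.
Proof.
  destruct x as [a b]; split; simpl;
    replace (t * a - 0 * b) with (t * a) by ring; replace (t * b + 0 * a) with (t * b) by ring.
  - apply (is_derive_ext (fun s => exp (s * a) * cos (s * b)));
      [intros s; simpl; do 2 f_equal; ring|].
    auto_derive; [easy | ring].
  - apply (is_derive_ext (fun s => exp (s * a) * sin (s * b)));
      [intros s; simpl; do 2 f_equal; ring|].
    auto_derive; [easy | ring].
Qed.

(* Scaled so that [KN N z w] is convertible to [ctaylor (z * Cconj w) N (INR N)]. *)
Definition ctaylor (x : C) (n : nat) (t : R) : C :=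
  csum (fun m => Cmult (RtoC (t ^ m / INR (fact m))) (cpow x m)) n.

Lemma is_derive_pow_div_fact (n : nat) (t : R) :
  is_derive (fun s => s ^ S n / INR (fact (S n))) t (t ^ n / INR (fact n)).
Proof.
  auto_derive; [easy|].
  change (fact n + n * fact n)%nat with (fact (S n)).
  change (match n with 0%nat => 1 | S _ => INR n + 1 end) with (INR (S n)).
  rewrite fact_simpl, mult_INR.
  field; split; [apply INR_fact_neq_0 | apply not_0_INR; easy].
Qed.

Lemma is_cderive_const (c : C) (t : R) : is_cderive (fun _ => c) t (RtoC 0).
Proof. split; simpl; auto_derive; easy. Qed.

Lemma is_cderive_ctaylor (x : C) (n : nat) (t : R) :
  is_cderive (ctaylor x (S n)) t (x * ctaylor x n t)%C.
Proof.
  induction n as [|n IHn].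
  - replace (x * ctaylor x 0 t)%C with (RtoC 0)
      by (change (ctaylor x 0 t) with (RtoC 0); ring).
    exact (is_cderive_const (ctaylor x 1 0) t).
  - replace (x * ctaylor x (S n) t)%C
      with (x * ctaylor x n t + RtoC (t ^ n / INR (fact n)) * cpow x (S n))%C
      by (change (ctaylor x (S n) t)
            with (ctaylor x n t + RtoC (t ^ n / INR (fact n)) * cpow x n)%C;
          change (cpow x (S n)) with (cpow x n * x)%C; ring).
    apply (is_cderive_plus _ _ _ _ _ IHn).
    apply is_cderive_RtoC_mul, is_derive_pow_div_fact.
Qed.

Definition cexp_rem (x : C) (n : nat) (t : R) : C :=
  (cexp (RtoC t * x) - ctaylor x n t)%C.

Lemma is_cderive_cexp_rem (x : C) (n : nat) (t : R) :
  is_cderive (cexp_rem x (S n)) t (x * cexp_rem x n t)%C.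
Proof.
  replace (x * cexp_rem x n t)%C with (x * cexp (RtoC t * x) - x * ctaylor x n t)%C
    by (unfold cexp_rem; ring).
  apply is_cderive_minus; [apply is_cderive_cexp | apply is_cderive_ctaylor].
Qed.

Lemma ctaylor_at_0 (x : C) (n : nat) : ctaylor x (S n) 0 = RtoC 1.
Proof.
  induction n as [|n IHn].
  - unfold ctaylor; simpl; rewrite Rdiv_1_r; ring.
  - change (ctaylor x (S (S n)) 0)
      with (ctaylor x (S n) 0 + RtoC (0 ^ S n / INR (fact (S n))) * cpow x (S n))%C.
    rewrite IHn, pow_i, Rdiv_0_l by lia; ring.
Qed.

Lemma cexp_RtoC (a : R) : cexp (RtoC a) = RtoC (exp a).
Proof.
  unfold cexp; rewrite re_RtoC, im_RtoC, cos_0, sin_0.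
  apply injective_projections; simpl; ring.
Qed.

Lemma cexp_rem_at_0 (x : C) (n : nat) : cexp_rem x (S n) 0 = RtoC 0.
Proof. unfold cexp_rem; rewrite ctaylor_at_0, Cmult_0_l, cexp_RtoC, exp_0; ring. Qed.

Lemma Cmod_cexp (y : C) : Cmod (cexp y) = exp (Re y).
Proof.
  unfold Cmod, cexp; simpl.
  replace (_ + _) with (exp (Re y) ^ 2 * ((sin (Im y))² + (cos (Im y))²))
    by (unfold Rsqr; ring).
  rewrite sin2_cos2, Rmult_1_r.
  apply sqrt_pow2, Rlt_le, exp_pos.
Qed.

Lemma le_of_is_derive_nonneg (h h' : R -> R) (t1 : R) : 0 <= t1 ->
  (forall t, is_derive h t (h' t)) -> (forall t, 0 <= t <= t1 -> 0 <= h' t) ->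
  h 0 <= h t1.
Proof.
  intros Ht1 Hh Hpos.
  destruct (MVT_gen h 0 t1 h') as [c [Hc Hmvt]].
  - intros t _; apply Hh.
  - intros t _; apply continuity_pt_filterlim, (ex_derive_continuous h).
    exists (h' t); apply Hh.
  - rewrite Rmin_left, Rmax_right in Hc by lra.
    assert (0 <= h' c) by (apply Hpos; lra).
    nra.
Qed.

Lemma inner_le_Cmod_mul (c v : C) : Re c * Re v + Im c * Im v <= Cmod c * Cmod v.
Proof.
  rewrite <- (Cmod_conj c), <- Cmod_mult.
  replace (Re c * Re v + Im c * Im v) with (Re (Cconj c * v)%C)
    by (destruct c, v; simpl; ring).
  apply (Rle_trans _ _ _ (Rle_abs _)), re_le_Cmod.
Qed.

Lemma Cmod_le_of_is_cderive (f f' : R -> C) (g g' : R -> R) (t1 : R) :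
  0 <= t1 -> f 0 = RtoC 0 -> g 0 = 0 ->
  (forall t, is_cderive f t (f' t)) -> (forall t, is_derive g t (g' t)) ->
  (forall t, 0 <= t <= t1 -> Cmod (f' t) <= g' t) ->
  Cmod (f t1) <= g t1.
Proof.
  intros Ht1 Hf0 Hg0 Hf Hg Hbound.
  set (c := f t1).
  assert (Hc : 0 <= Cmod c) by apply Cmod_ge_0.
  assert (Hg_nonneg : 0 <= g t1).
  { rewrite <- Hg0; apply (le_of_is_derive_nonneg g g'); auto.
    intros t Ht; apply (Rle_trans _ _ _ (Cmod_ge_0 (f' t))), Hbound, Ht. }
  (* [h] is nondecreasing as <c, f'> <= |c| |f'| <= |c| g'; at [t1] it reads |c|^2 <= |c| g t1. *)
  pose (h t := Cmod c * g t - (Re c * Re (f t) + Im c * Im (f t))).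
  assert (Hh : h 0 <= h t1).
  { apply (le_of_is_derive_nonneg h
      (fun t => Cmod c * g' t - (Re c * Re (f' t) + Im c * Im (f' t)))); auto.
    - intros t; destruct (Hf t) as [Hre Him].
      apply (is_derive_minus _ _ _ _ _ (is_derive_scal _ _ _ _ (Hg t))).
      apply (is_derive_plus (fun s => Re c * Re (f s)) (fun s => Im c * Im (f s)));
        apply is_derive_scal; assumption.
    - intros t Ht.
      pose proof (inner_le_Cmod_mul c (f' t)).
      pose proof (Rmult_le_compat_l _ _ _ Hc (Hbound t Ht)).
      lra. }
  unfold h in Hh; rewrite Hf0, Hg0 in Hh; simpl in Hh; fold c in Hh.
  pose proof (Cmod2_alt c).
  nra.
Qed.

Lemma Cmod_cexp_rem_le (x : C) (n : nat) (t : R) : 0 <= t ->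
  Cmod (cexp_rem x n t) <= Re (cexp_rem (RtoC (Cmod x)) n t).
Proof.
  revert t; induction n as [|n IHn]; intros t Ht.
  - unfold cexp_rem, ctaylor; simpl csum.
    replace (cexp (RtoC t * x) - RtoC 0)%C with (cexp (RtoC t * x)) by ring.
    replace (cexp (RtoC t * RtoC (Cmod x)) - RtoC 0)%C with (RtoC (exp (t * Cmod x)))
      by (rewrite <- RtoC_mult, cexp_RtoC; ring).
    rewrite Cmod_cexp, re_scal_l, re_RtoC.
    assert (Hle : t * Re x <= t * Cmod x).
    { apply Rmult_le_compat_l; [exact Ht|].
      exact (Rle_trans _ _ _ (Rle_abs (Re x)) (re_le_Cmod x)). }
    destruct (Rle_lt_or_eq_dec _ _ Hle) as [Hlt | ->].
    + apply Rlt_le, exp_increasing, Hlt.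
    + apply Rle_refl.
  - apply (Cmod_le_of_is_cderive (cexp_rem x (S n)) (fun s => x * cexp_rem x n s)%C
      (fun s => Re (cexp_rem (RtoC (Cmod x)) (S n) s))
      (fun s => Cmod x * Re (cexp_rem (RtoC (Cmod x)) n s))); auto.
    + apply cexp_rem_at_0.
    + rewrite cexp_rem_at_0; reflexivity.
    + apply is_cderive_cexp_rem.
    + intros s; rewrite <- re_scal_l; apply is_cderive_cexp_rem.
    + intros s Hs; rewrite Cmod_mult.
      apply Rmult_le_compat_l; [apply Cmod_ge_0 | apply IHn, Hs].
Qed.

Lemma cpow_RtoC (r : R) (m : nat) : cpow (RtoC r) m = RtoC (r ^ m).
Proof.
  induction m as [|m IHm]; [reflexivity|].
  cbn [cpow]; rewrite IHm, <- RtoC_mult; f_equal; simpl; ring.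
Qed.

Lemma Re_ctaylor_RtoC (r t : R) (n : nat) :
  Re (ctaylor (RtoC r) (S n) t) = sum_f_R0 (fun m => (t * r) ^ m / INR (fact m)) n.
Proof.
  induction n as [|n IHn].
  - unfold ctaylor; simpl; field.
  - change (ctaylor (RtoC r) (S (S n)) t) with
      (ctaylor (RtoC r) (S n) t + RtoC (t ^ S n / INR (fact (S n))) * cpow (RtoC r) (S n))%C.
    rewrite re_plus, IHn, re_scal_l, cpow_RtoC, re_RtoC, tech5, Rpow_mult_distr.
    unfold Rdiv; ring.
Qed.

Lemma Re_cexp_rem_RtoC (r t : R) (n : nat) :
  Re (cexp_rem (RtoC r) (S n) t)
    = exp (t * r) - sum_f_R0 (fun m => (t * r) ^ m / INR (fact m)) n.
Proof.
  unfold cexp_rem, Cminus.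
  rewrite re_plus, <- Re_ctaylor_RtoC, <- RtoC_mult, cexp_RtoC, re_RtoC.
  reflexivity.
Qed.

Lemma is_series_exp (s : R) : is_series (fun m => s ^ m / INR (fact m)) (exp s).
Proof.
  apply (is_series_ext (fun m => scal (pow_n s m) (/ INR (fact m)))); [|apply is_exp_Reals].
  intros m; rewrite pow_n_pow; reflexivity.
Qed.

Lemma pow_div_fact_S (s : R) (m : nat) :
  s ^ S m / INR (fact (S m)) = s ^ m / INR (fact m) * (s / INR (S m)).
Proof.
  pose proof (INR_fact_neq_0 m); pose proof (not_0_INR (S m) (Nat.neq_succ_0 m)).
  rewrite fact_simpl, mult_INR; simpl pow.
  field; auto.
Qed.

Lemma exp_sub_sum_le (s rho : R) (n : nat) :
  0 <= s -> rho < 1 -> s <= INR (S n) * rho ->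
  exp s - sum_f_R0 (fun m => s ^ m / INR (fact m)) n
    <= s ^ S n / INR (fact (S n)) / (1 - rho).
Proof.
  intros Hs Hrho Hsn.
  set (a m := s ^ m / INR (fact m)).
  assert (Hrho0 : 0 <= rho).
  { pose proof (lt_0_INR (S n) (Nat.lt_0_succ n)); nra. }
  assert (Ha_nonneg : forall m, 0 <= a m).
  { intros m; apply Rmult_le_pos;
      [apply pow_le, Hs | apply Rlt_le, Rinv_0_lt_compat, INR_fact_lt_0]. }
  assert (Hratio : forall k, a (S n + k)%nat <= a (S n) * rho ^ k).
  { induction k as [|k IHk]; [rewrite Nat.add_0_r; simpl; lra|].
    rewrite Nat.add_succ_r; unfold a at 1; rewrite pow_div_fact_S; fold (a (S n + k)%nat).
    assert (Hpos : 0 < INR (S (S n + k))) by (apply lt_0_INR; lia).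
    assert (Hstep : s / INR (S (S n + k)) <= rho).
    { assert (INR (S n) <= INR (S (S n + k))) by (apply le_INR; lia).
      apply (Rmult_le_reg_r _ _ _ Hpos).
      unfold Rdiv; rewrite Rmult_assoc, Rinv_l by lra; nra. }
    replace (a (S n) * rho ^ S k) with (a (S n) * rho ^ k * rho) by (simpl; ring).
    apply Rmult_le_compat; [apply Ha_nonneg | | exact IHk | exact Hstep].
    apply Rmult_le_pos; [exact Hs | apply Rlt_le, Rinv_0_lt_compat, Hpos]. }
  assert (Hgeom : ex_series (fun k => rho ^ k))
    by (apply ex_series_geom; rewrite Rabs_pos_eq; assumption).
  rewrite <- (is_series_unique _ _ (is_series_exp s)); fold a.
  rewrite (Series_incr_n a (S n)), Nat.pred_succ;
    [| lia | eexists; apply is_series_exp].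
  apply (Rle_trans _ (Series (fun k => a (S n) * rho ^ k))).
  - ring_simplify.
    apply Series_le; [intros k; split; [apply Ha_nonneg | apply Hratio]|].
    exact (@ex_series_scal_l R_AbsRing R_NormedModule (a (S n)) _ Hgeom).
  - rewrite Series_scal_l, Series_geom by (rewrite Rabs_pos_eq; assumption).
    apply Rle_refl.
Qed.

Lemma pow_div_fact_le_exp (x : R) (n : nat) : 0 <= x -> x ^ n / INR (fact n) <= exp x.
Proof.
  intros Hx; apply (Rle_trans _ (sum_f_R0 (fun k => x ^ k / INR (fact k)) n));
    [|apply exp_ge_taylor, Hx].
  assert (Hterm : forall k, 0 <= x ^ k / INR (fact k)).
  { intros k; apply Rmult_le_pos;
      [apply pow_le, Hx | apply Rlt_le, Rinv_0_lt_compat, INR_fact_lt_0]. }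
  destruct n as [|n]; [simpl; lra|].
  rewrite tech5; pose proof (cond_pos_sum _ n Hterm); lra.
Qed.

Lemma exp_mul_INR (n : nat) (y : R) : exp (INR n * y) = exp y ^ n.
Proof.
  induction n as [|n IHn]; [simpl; rewrite Rmult_0_l; apply exp_0|].
  rewrite S_INR, Rmult_plus_distr_r, Rmult_1_l, exp_plus, IHn; simpl; ring.
Qed.

Lemma mul_exp_one_sub_le (r rho : R) :
  0 <= r <= rho -> rho <= 1 -> r * exp (1 - r) <= rho * exp (1 - rho).
Proof.
  intros Hr Hrho.
  assert (Hle : r <= rho * exp (r - rho)).
  { pose proof (exp_ineq1_le (r - rho)); nra. }
  replace (rho * exp (1 - rho)) with (rho * exp (r - rho) * exp (1 - r))
    by (rewrite Rmult_assoc, <- exp_plus; do 2 f_equal; ring).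
  apply Rmult_le_compat_r; [apply Rlt_le, exp_pos | exact Hle].
Qed.

Lemma mul_exp_one_sub_lt_1 (rho : R) : 0 < rho < 1 -> rho * exp (1 - rho) < 1.
Proof.
  intros Hrho.
  assert (Hlt : rho < exp (rho - 1)) by (pose proof (exp_ineq1 (rho - 1)); lra).
  replace 1 with (exp (rho - 1) * exp (1 - rho)) at 2
    by (rewrite <- exp_plus; replace (rho - 1 + (1 - rho)) with 0 by ring; apply exp_0).
  apply Rmult_lt_compat_r; [apply exp_pos | exact Hlt].
Qed.

Lemma exp_sub_sum_le_pow (r rho : R) (n : nat) :
  0 <= r <= rho -> rho < 1 ->
  exp (INR (S n) * r) - sum_f_R0 (fun m => (INR (S n) * r) ^ m / INR (fact m)) n
    <= exp (INR (S n) * r) * (rho * exp (1 - rho)) ^ S n / (1 - rho).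
Proof.
  intros Hr Hrho.
  assert (HN : 0 <= INR (S n)) by apply pos_INR.
  assert (Hs : 0 <= INR (S n) * r) by nra.
  assert (Hsn : INR (S n) * r <= INR (S n) * rho) by nra.
  apply (Rle_trans _ _ _ (exp_sub_sum_le _ rho n Hs Hrho Hsn)).
  set (N := S n).
  apply Rmult_le_compat_r; [apply Rlt_le, Rinv_0_lt_compat; lra|].
  apply (Rle_trans _ (r ^ N * exp (INR N))).
  - rewrite Rpow_mult_distr, Rmult_comm; unfold Rdiv; rewrite Rmult_assoc.
    apply Rmult_le_compat_l; [apply pow_le; lra | apply pow_div_fact_le_exp, HN].
  - replace (r ^ N * exp (INR N)) with (exp (INR N * r) * (r * exp (1 - r)) ^ N)
      by (rewrite Rpow_mult_distr, <- exp_mul_INR, Rmult_comm, Rmult_assoc, <- exp_plus;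
          do 2 f_equal; ring).
    apply Rmult_le_compat_l; [apply Rlt_le, exp_pos|].
    apply pow_incr; split.
    + apply Rmult_le_pos; [lra | apply Rlt_le, exp_pos].
    + apply mul_exp_one_sub_le; lra.
Qed.

Lemma sqrt_INR_mul_pow_le (q a : R) (N : nat) :
  0 <= q -> 0 <= a -> sqrt (INR N) * a * q ^ N <= (q * (1 + a)) ^ N.
Proof.
  intros Hq Ha.
  assert (Hsqrt : sqrt (INR N) <= INR N).
  { destruct N as [|N]; [simpl; rewrite sqrt_0; lra|].
    assert (1 <= INR (S N)) by (apply (le_INR 1); lia).
    rewrite <- (sqrt_square (INR (S N))) at 2 by lra.
    apply sqrt_le_1_alt; nra. }
  rewrite Rpow_mult_distr, Rmult_comm.
  apply Rmult_le_compat_l; [apply pow_le, Hq|].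
  pose proof (Rle_pow_lin a N Ha); nra.
Qed.

Lemma exp_sub_sum_le_sqrt (r rho a : R) (n : nat) :
  0 <= r <= rho -> rho < 1 -> 0 < a ->
  exp (INR (S n) * r) - sum_f_R0 (fun m => (INR (S n) * r) ^ m / INR (fact m)) n
    <= / ((1 - rho) * a) * (exp (INR (S n) * r) / sqrt (INR (S n)))
       * (rho * exp (1 - rho) * (1 + a)) ^ S n.
Proof.
  intros Hr Hrho Ha.
  apply (Rle_trans _ _ _ (exp_sub_sum_le_pow r rho n Hr Hrho)).
  set (q := rho * exp (1 - rho)).
  assert (Hq : 0 <= q) by (apply Rmult_le_pos; [lra | apply Rlt_le, exp_pos]).
  pose proof (sqrt_INR_mul_pow_le q a (S n) Hq (Rlt_le _ _ Ha)) as Hdecay.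
  assert (HsN : 0 < sqrt (INR (S n))) by (apply sqrt_lt_R0, lt_0_INR; lia).
  set (K := exp (INR (S n) * r) / ((1 - rho) * a * sqrt (INR (S n)))).
  assert (HK : 0 < K).
  { apply Rdiv_lt_0_compat; [apply exp_pos|].
    apply Rmult_lt_0_compat; [apply Rmult_lt_0_compat|]; lra. }
  replace (exp (INR (S n) * r) * q ^ S n / (1 - rho))
    with (K * (sqrt (INR (S n)) * a * q ^ S n)) by (unfold K; field; lra).
  replace (/ ((1 - rho) * a) * (exp (INR (S n) * r) / sqrt (INR (S n))) * (q * (1 + a)) ^ S n)
    with (K * (q * (1 + a)) ^ S n) by (unfold K; field; lra).
  apply Rmult_le_compat_l; lra.
Qed.

Theorem lemma4p5 :
  forall lam : R, 0 < lam < 1 ->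
  exists Cst delta : R, 0 < Cst /\ 0 < delta < 1 /\
    forall (N : nat) (z w : C), (1 <= N)%nat ->
      Cmod z < lam -> Cmod w < lam ->
      Cmod (Cminus (cexp (Cmult (RtoC (INR N)) (Cmult z (Cconj w)))) (KN N z w))
        <= Cst * (exp (INR N * Cmod (Cmult z (Cconj w))) / sqrt (INR N)) * delta ^ N.
Proof.
  intros lam Hlam.
  set (rho := lam * lam); set (d0 := rho * exp (1 - rho)); set (a := (1 - d0) / (2 * d0)).
  assert (Hrho : 0 < rho < 1) by (unfold rho; nra).
  assert (Hd0 : 0 < d0 < 1).
  { split; [apply Rmult_lt_0_compat; [lra | apply exp_pos] |].
    apply mul_exp_one_sub_lt_1, Hrho. }
  assert (Ha : 0 < a) by (apply Rdiv_lt_0_compat; lra).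
  assert (Hdelta : d0 * (1 + a) = (1 + d0) / 2) by (unfold a; field; lra).
  exists (/ ((1 - rho) * a)), (d0 * (1 + a)); split; [|split; [lra|]].
  { apply Rinv_0_lt_compat, Rmult_lt_0_compat; lra. }
  intros N z w HN Hz Hw; destruct N as [|n]; [lia|].
  assert (Hr : 0 <= Cmod (z * Cconj w) <= rho).
  { rewrite Cmod_mult, Cmod_conj.
    pose proof (Cmod_ge_0 z); pose proof (Cmod_ge_0 w); unfold rho; split; nra. }
  change (Cminus (cexp (Cmult (RtoC (INR (S n))) (Cmult z (Cconj w)))) (KN (S n) z w))
    with (cexp_rem (z * Cconj w) (S n) (INR (S n))).
  apply (Rle_trans _ _ _ (Cmod_cexp_rem_le _ (S n) _ (pos_INR _))).
  rewrite Re_cexp_rem_RtoC.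
  exact (exp_sub_sum_le_sqrt _ rho a n Hr (proj2 Hrho) Ha).
Qed.
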